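(* For the $2$-cache problem, there is no knowledge state algorithm that is $\tfrac32$-competitive as a knowledge state algorithm and all of whose knowledge states have at most two active pages.
   Context: The $2$-cache problem: an infinite set $P$ of pages; states are the $2$-element subsets of $P$, with a given initial cache $s^0$; requests are pages; $d(x,y)=|x\setminus y|$; $\mathrm{cost}(x,r,y)=2$ if $x=y$ and $r\notin x$, $=d(x,y)$ if $r\in x$ or $r\in y$, and $=d(x,y)+1$ otherwise. $\Pi$ is the set of finitely supported probability distributions on states; $\mathrm{cost}(\pi,r,\pi')$ is the minimum of $\sum_{x,y}\gamma(x,y)\mathrm{cost}(x,r,y)$ over distributions $\gamma$ on $\mathrm{supp}(\pi)\times\mathrm{supp}(\pi')$ with marginals $\pi,\pi'$. An estimator is a function $\omega\ge0$ on states with $\omega(y)\le\omega(x)+d(x,y)$; a set $S$ supports $\omega$ if each $y$ has $x\in S$ with $\omega(y)=\omega(x)+d(x,y)$, and the estimator support is the minimal such set. The update is $(\omega\wedge r)(y)=\inf_x\{\omega(x)+\mathrm{cost}(x,r,y)\}$. Knowledge state algorithm $\mathcal A$: a knowledge state is a pair $k=(\pi,\omega)$, $\pi\in\Pi$, $\omega$ an estimator with finite support; initial state $(s^0,\omega^0)$ with $\omega^0(s^0)=0$. For each $k=(\pi,\omega)$ and request $r$, $\mathcal A$ specifies subsequents $k_i=(\pi_i,\omega_i)$ with weights $\lambda_i>0$ summing to $1$ (next state $k_i$ with probability $\lambda_i$) and a number $\mathrm{adjust}(k,r)$ with $(\omega\wedge r)(x)\ge\mathrm{adjust}(k,r)+\sum_i\lambda_i\omega_i(x)$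 for all $x$. Step cost $\mathrm{cost}(\pi,r,\sum_i\lambda_i\pi_i)$; $\mathrm{cost}_{\mathcal A}(\varrho)$ and $\mathrm{adjust}_{\mathcal A}(\varrho)$ are the sums over the steps. $\mathcal A$ is $C$-competitive as a knowledge state algorithm if there is $K$ with $E(\mathrm{cost}_{\mathcal A}(\varrho))\le C\cdot E(\mathrm{adjust}_{\mathcal A}(\varrho)+\omega^n(x))+K$ for every $\varrho=r^1\dots r^n$ and every state $x$, where $\omega^n$ is the estimator after $n$ steps. The active pages of a knowledge state $(\pi,\omega)$ are the pages belonging to some configuration in the distributional support of $\pi$ or in the estimator support of $\omega$. *)

From HB Require Import structures.
From mathcomp Require Import all_boot all_order all_algebra.
From mathcomp Require Import finmap.
From mathcomp Require Import boolp classical_sets reals.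
From Stdlib Require List.
Set Implicit Arguments. Unset Strict Implicit. Unset Printing Implicit Defensive.
Import Order.TTheory GRing.Theory Num.Theory.
Local Open Scope ring_scope.
Local Open Scope classical_set_scope.


Section TwoCache.
Variable R : realType.
Variable P : choiceType.

Definition state := {s : {fset P} | #|` s| == 2%N}.

Definition dist (x y : state) : R := (#|` (val x `\` val y)%fset|)%:R.

Definition cost (x : state) (r : P) (y : state) : R :=
  if (x == y) && (r \notin val x) then 2
  else if (r \in val x) || (r \in val y) then dist x y
  else dist x y + 1.

Definition is_distr (pi : state -> R) : Prop :=
  (forall x, 0 <= pi x) /\
  exists s : seq state, [/\ uniq s, (forall x, pi x != 0 -> x \in s)
                          & \sum_(x <- s) pi x = 1].

Definition supp (pi : state -> R) (x : state) : Prop := 0 < pi x.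

Definition coupling_on (g : state -> state -> R) (pi pi' : state -> R)
    (sx sy : seq state) : Prop :=
  [/\ forall x y, 0 <= g x y,
      forall x y, g x y != 0 -> supp pi x /\ supp pi' y,
      uniq sx /\ uniq sy,
      (forall x, pi x != 0 -> x \in sx) /\ (forall y, pi' y != 0 -> y \in sy)
    & (forall x, \sum_(y <- sy) g x y = pi x) /\
      (forall y, \sum_(x <- sx) g x y = pi' y)].

(** cost(pi, r, pi') : the minimum (= infimum, it is attained) over couplings. *)
Definition tcost (pi : state -> R) (r : P) (pi' : state -> R) : R :=
  inf [set v | exists g sx sy, coupling_on g pi pi' sx sy /\
         v = \sum_(x <- sx) \sum_(y <- sy) g x y * cost x r y].

Definition is_estimator (w : state -> R) : Prop :=
  (forall x, 0 <= w x) /\ (forall x y, w y <= w x + dist x y).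

Definition supports (w : state -> R) (S : set state) : Prop :=
  forall y, exists2 x, S x & w y = w x + dist x y.

Definition is_est_support (w : state -> R) (S : set state) : Prop :=
  supports w S /\ (forall S', S' `<=` S -> supports w S' -> S' = S).

Definition has_finite_support (w : state -> R) : Prop :=
  exists s : seq state, supports w [set x | x \in s].

Definition update (w : state -> R) (r : P) (y : state) : R :=
  inf [set w x + cost x r y | x in [set: state]].

Record kstate := KState { kpi : state -> R ; komega : state -> R }.

Definition wf_kstate (k : kstate) : Prop :=
  [/\ is_distr (kpi k), is_estimator (komega k) & has_finite_support (komega k)].

Definition active (k : kstate) (p : P) : Prop :=
  (exists x, supp (kpi k) x /\ p \in val x) \/
  (exists S, is_est_support (komega k) S /\ exists x, S x /\ p \in val x).

Definition at_most_two_active (k : kstate) : Prop :=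
  exists a b : P, forall p, active k p -> p = a \/ p = b.

Definition kinit (s0 : state) : kstate :=
  KState (fun x => (x == s0)%:R) (fun x => dist s0 x).

Record kalg := KAlg {
  ka_next : kstate -> P -> seq (R * kstate) ;
  ka_adjust : kstate -> P -> R }.

Definition mix (l : seq (R * kstate)) (x : state) : R :=
  \sum_(p <- l) p.1 * kpi p.2 x.

Inductive reachable (A : kalg) (s0 : state) : kstate -> Prop :=
| reach0 : reachable A s0 (kinit s0)
| reachS k r lam k' : reachable A s0 k -> List.In (lam, k') (ka_next A k r) ->
    reachable A s0 k'.

Definition valid_step (A : kalg) (k : kstate) (r : P) : Prop :=
  [/\ forall lam k', List.In (lam, k') (ka_next A k r) -> 0 < lam,
      \sum_(p <- ka_next A k r) p.1 = 1
    & forall x, ka_adjust A k r + \sum_(p <- ka_next A k r) p.1 * komega p.2 x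
                <= update (komega k) r x].

Definition valid_kalg (A : kalg) (s0 : state) : Prop :=
  forall k, reachable A s0 k -> wf_kstate k /\ forall r, valid_step A k r.

Fixpoint Ecost (A : kalg) (k : kstate) (rho : seq P) : R :=
  match rho with
  | [::] => 0
  | r :: rho' => tcost (kpi k) r (mix (ka_next A k r)) +
                 \sum_(p <- ka_next A k r) p.1 * Ecost A p.2 rho'
  end.

Fixpoint Eadj (A : kalg) (k : kstate) (rho : seq P) (x : state) : R :=
  match rho with
  | [::] => komega k x
  | r :: rho' => ka_adjust A k r +
                 \sum_(p <- ka_next A k r) p.1 * Eadj A p.2 rho' x
  end.

Definition competitive (A : kalg) (s0 : state) (C : R) : Prop :=
  exists K : R, forall (rho : seq P) (x : state),
    Ecost A (kinit s0) rho <= C * Eadj A (kinit s0) rho x + K.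

End TwoCache.

From Pilot Require Import Defs.
From HB Require Import structures.
From mathcomp Require Import all_boot all_order all_algebra.
From mathcomp Require Import finmap.
From mathcomp Require Import boolp classical_sets reals.
From mathcomp Require Import lra.
Import Order.TTheory GRing.Theory Num.Theory.
Set Implicit Arguments. Unset Strict Implicit. Unset Printing Implicit Defensive.
Local Open Scope ring_scope.
Local Open Scope classical_set_scope.

(* With at most two active pages a knowledge state carries no uncertainty: every
   configuration in the support of its distribution or of its estimator consists of
   the two active pages, so the distribution is a point mass at some z and the
   estimator is omega(z) + d(z, .).  Against such an algorithm the adversary requests
   three pages cyclically, and we track the potential 3/2 omega(z) + 1/12 lookahead,
   where the lookahead measures how many of the next two requests z already holds.
   On every request the expected cost minus 3/2 adjust, plus the expected change of
   the potential, is at least 1/12: a hit either lowers the lookahead or forces a move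
   of cost at least 1, and on a miss the estimator update at the two neighbours of z
   holding the requested page caps 3/2 adjust while the move costs at least 1.  Hence
   the expected cost exceeds 3/2 (adjust + omega) by n/12 - O(1) after n requests. *)

Section TwoCache.
Variable R : realType.
Variable P : choiceType.
Local Notation state := (state P).
Local Notation dist := (@dist R P).
Local Notation cost := (@cost R P).
Local Notation kstate := (kstate R P).
Implicit Types (x y z : state) (r : P).

Lemma card_state x : #|` val x| = 2%N.
Proof. exact/eqP/(valP x). Qed.

Lemma eq_state_fsubset x y : (val x `<=` val y)%fset -> x = y.
Proof. by move=> sxy; apply/val_inj/eqP; rewrite eqEfcard sxy !card_state. Qed.

Lemma dist_ge0 x y : 0 <= dist x y.
Proof. exact: ler0n. Qed.

Lemma dist_le2 x y : dist x y <= 2.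
Proof.
rewrite /Defs.dist (ler_nat R _ 2); apply: leq_trans (fsubset_leq_card (fsubsetDl _ _)) _.
by rewrite card_state.
Qed.

Lemma dist_xx x : dist x x = 0.
Proof. by rewrite /Defs.dist fsetDv cardfs0. Qed.

Lemma dist_ge1 x y : x != y -> 1 <= dist x y.
Proof.
apply: contraNT; rewrite /Defs.dist ler1n -leqNgt leqn0 cardfs_eq0 fsetD_eq0.
by move/eq_state_fsubset->.
Qed.

Lemma dist_add_ge1 x x1 x2 : x1 != x2 -> 1 <= dist x x1 + dist x x2.
Proof.
move=> x12; have := dist_ge0 x x1; have := dist_ge0 x x2.
have [xx1|xx1] := eqVneq x x1; last by have := dist_ge1 xx1; lra.
by rewrite -xx1 in x12; have := dist_ge1 x12; lra.
Qed.

Lemma cost_ge0 x r y : 0 <= cost x r y.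
Proof.
rewrite /Defs.cost; case: ifP => // _.
by case: ifP => _; rewrite ?addr_ge0 ?dist_ge0.
Qed.

Lemma cost_inl x r y : r \in val x -> cost x r y = dist x y.
Proof. by move=> rx; rewrite /Defs.cost rx andbF. Qed.

Lemma cost_inr x r y : x != y -> r \in val y -> cost x r y = dist x y.
Proof. by move=> /negbTE nxy ry; rewrite /Defs.cost nxy ry orbT. Qed.

Lemma cost_notinl_ge1 x r y : r \notin val x -> 1 <= cost x r y.
Proof.
move=> /negbTE rx; rewrite /Defs.cost rx /=.
have [<-|nxy] := eqVneq x y; first by rewrite ler1n.
have := dist_ge1 nxy; have := dist_ge0 x y.
by case: ifP => _; lra.
Qed.

Lemma fset_pair_state x (a b : P) :
  (forall p, p \in val x -> p = a \/ p = b) -> val x = [fset a; b]%fset.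
Proof.
move=> xab; apply/eqP; rewrite eqEfcard card_state cardfs2.
have -> // : (val x `<=` [fset a; b])%fset.
by apply/fsubsetP => p /xab [->|->]; rewrite !inE eqxx ?orbT.
by case: (a != b).
Qed.

Lemma eq_state_pair (a b : P) x y :
  (forall p, p \in val x -> p = a \/ p = b) ->
  (forall p, p \in val y -> p = a \/ p = b) -> x = y.
Proof.
by move=> /fset_pair_state ex /fset_pair_state ey; apply: val_inj; rewrite ex ey.
Qed.

Lemma state_no_three x (a b c : P) : a != b -> a != c -> b != c ->
  a \in val x -> b \in val x -> c \notin val x.
Proof.
move=> ab ac bc ax bx; have /eqP <- : [fset a; b]%fset == val x.
  rewrite eqEfcard card_state cardfs2 ab andbT.
  by apply/fsubsetP => p; rewrite !inE => /orP[] /eqP ->.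
by rewrite !inE negb_or ![c == _]eq_sym ac bc.
Qed.

Lemma state_as_pair z : exists a b : P, a != b /\ val z = [fset a; b]%fset.
Proof.
have /fset0Pn [a az] : val z != fset0 by rewrite -cardfs_eq0 card_state.
have /cardfs1P [b zab] : #|` (val z `\ a)%fset| == 1%N.
  by move: (card_state z); rewrite (cardfsD1 a) az add1n => -[/eqP]; rewrite eq_sym.
exists a, b; split; last by rewrite -(fsetD1K az) zab.
by have := fset11 b; rewrite -zab in_fsetD1 eq_sym => /andP[].
Qed.

Lemma dist_le1_common x y (a : P) : a \in val x -> a \in val y -> dist x y <= 1.
Proof.
move=> ax ay; rewrite /Defs.dist (ler_nat R _ 1).
have ya : ([fset a] `<=` val y)%fset by rewrite fsub1set.
have := fsubset_leq_card (fsetDS (val x) ya).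
by rewrite (@cardfsDS _ _ [fset a]%fset) ?fsub1set // card_state cardfs1.
Qed.

Lemma state_of_pair (a b : P) : a != b -> {x : state | val x = [fset a; b]%fset}.
Proof.
move=> ab; have h : #|` [fset a; b]%fset| == 2%N by rewrite cardfs2 ab.
by exists (exist (fun s : {fset P} => #|` s| == 2%N) _ h).
Qed.

Lemma two_neighbours z r : r \notin val z -> exists x1 x2 : state,
  [/\ x1 != x2, r \in val x1, r \in val x2, dist z x1 <= 1 & dist z x2 <= 1].
Proof.
move=> rz; have [a [b [ab zab]]] := state_as_pair z.
have az : a \in val z by rewrite zab fset21.
have bz : b \in val z by rewrite zab fset22.
have [ra rb] : r != a /\ r != b by split; apply: contraNneq rz => ->.
have [x1 x1E] := state_of_pair ra; have [x2 x2E] := state_of_pair rb.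
exists x1, x2; rewrite x1E x2E !fset21; split => //.
- apply: contra_neq ab => /(congr1 val); rewrite x1E x2E => e12.
  have := fset22 r a; rewrite e12 !inE => /orP[/eqP ar|/eqP //].
  by rewrite ar eqxx in ra.
- by apply: (dist_le1_common az); rewrite x1E fset22.
- by apply: (dist_le1_common bz); rewrite x2E fset22.
Qed.

Lemma est_support_exists (w : state -> R) (s : seq state) :
  supports w [set x | x \in s] -> exists S, is_est_support w S.
Proof.
elim: {s}(size s).+1 {-2}s (ltnSn (size s)) => // n IH s sn ssup.
have [smin|] := pselect (forall S', S' `<=` [set x | x \in s] -> supports w S' ->
                                  S' = [set x | x \in s]).
  by exists [set x | x \in s].
move=> /existsNP [S' /not_implyP [S's /not_implyP [S'sup S'ns]]].
have /existsNP [x0 /not_implyP [x0s nS'x0]] : ~ forall x, x \in s -> S' x.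
  by move=> sS'; apply/S'ns/seteqP; split=> // x /sS'.
apply: (IH [seq x <- s | `[< S' x >]]) => [|y].
  rewrite size_filter -ltnS; apply: leq_trans sn; rewrite ltnS.
  rewrite -[X in (_ < X)%N](count_predC (fun x => `[< S' x >])) -[X in (X < _)%N]addn0.
  by rewrite ltn_add2l -has_count; apply/hasP; exists x0 => //=; apply/asboolPn.
have [x S'x ->] := S'sup y; exists x => //=.
by rewrite mem_filter S's // andbT; apply/asboolP.
Qed.

Definition point z : state -> R := fun y => (y == z)%:R.

Definition kstate_at (k : kstate) z : Prop :=
  kpi k = point z /\ forall y, komega k y = komega k z + dist z y.

Lemma kstate_at_init s0 : kstate_at (kinit R s0) s0.
Proof. by split=> // y; rewrite /= dist_xx add0r. Qed.

Lemma kstate_at_two_active k : wf_kstate k -> at_most_two_active k ->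
  exists z, kstate_at k z.
Proof.
move=> [[pi_ge0 [s [us pis pi1]]] _ [s' /est_support_exists [S estS]]] [a [b act]].
have supp_pi x : kpi k x != 0 -> supp (kpi k) x.
  by move=> px; rewrite /supp lt_neqAle eq_sym px pi_ge0.
have pi_ab x : kpi k x != 0 -> forall p, p \in val x -> p = a \/ p = b.
  by move=> /supp_pi px p xp; apply: act; left; exists x.
have S_ab x : S x -> forall p, p \in val x -> p = a \/ p = b.
  by move=> Sx p xp; apply: act; right; exists S; split=> //; exists x.
have [[z pz]|/forallNP pi0] := pselect (exists z, kpi k z != 0); last first.
  move: pi1; rewrite big1 => [/esym/eqP|x _]; first by rewrite oner_eq0.
  exact/eqP/negPn/negP/pi0.
have pi_out y : y != z -> kpi k y = 0.
  move=> yz; apply: contraNeq yz => py.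
  exact/eqP/(eq_state_pair (pi_ab y py) (pi_ab z pz)).
exists z; split.
  apply/funext=> y; rewrite /point; have [->|/pi_out //] := eqVneq y z.
  by rewrite -pi1 (bigD1_seq z) ?pis //= big1 ?addr0 // => x /pi_out.
move=> y; have [x Sx ->] := estS.1 y.
by rewrite (eq_state_pair (S_ab x Sx) (pi_ab z pz)).
Qed.

Lemma update_le (w : state -> R) r x y : (forall x, 0 <= w x) ->
  update w r y <= w x + cost x r y.
Proof.
move=> w_ge0; apply: ge_inf; last by exists x.
by exists 0 => _ [x' _ <-]; rewrite addr_ge0 ?cost_ge0.
Qed.

Lemma map_f_In (I : Type) (T : eqType) (g : I -> T) (L : seq I) p :
  List.In p L -> g p \in map g L.
Proof. by elim: L => //= q L IH [->|/IH Lp]; rewrite inE ?eqxx ?Lp ?orbT. Qed.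

Lemma ler_sum_In (I : Type) (L : seq I) (F G : I -> R) :
  (forall p, List.In p L -> F p <= G p) -> \sum_(p <- L) F p <= \sum_(p <- L) G p.
Proof.
elim: L => [|p L IH] FG; rewrite ?big_nil // !big_cons.
by rewrite lerD ?FG ?IH //; [left | move=> q Lq; apply: FG; right].
Qed.

Lemma eq_big_In (I : Type) (L : seq I) (F G : I -> R) :
  (forall p, List.In p L -> F p = G p) -> \sum_(p <- L) F p = \sum_(p <- L) G p.
Proof. by move=> FG; apply/le_anti; rewrite !ler_sum_In // => p /FG ->. Qed.

Section Expectation.
Variable T : Type.
Implicit Types (L : seq (R * T)) (F G : T -> R).

Definition expect L F : R := \sum_(p <- L) p.1 * F p.2.

Lemma expectD L F G : expect L (fun t => F t + G t) = expect L F + expect L G.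
Proof. by rewrite -big_split; apply: eq_bigr => p _; rewrite mulrDr. Qed.

Lemma expectB L F G : expect L (fun t => F t - G t) = expect L F - expect L G.
Proof. by rewrite -sumrB; apply: eq_bigr => p _; rewrite mulrBr. Qed.

Lemma expectZ L (a : R) F : expect L (fun t => a * F t) = a * expect L F.
Proof. by rewrite mulr_sumr; apply: eq_bigr => p _; rewrite mulrCA. Qed.

Lemma expect_cst L (a : R) : \sum_(p <- L) p.1 = 1 -> expect L (fun=> a) = a.
Proof. by move=> L1; rewrite /expect -big_distrl /= L1 mul1r. Qed.

Lemma ler_expect L F G : (forall p, List.In p L -> 0 < p.1) ->
  (forall p, List.In p L -> F p.2 <= G p.2) -> expect L F <= expect L G.
Proof.
move=> L_gt0 FG; apply: ler_sum_In => p Lp.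
by apply: ler_wpM2l; [exact/ltW/L_gt0 | exact: FG].
Qed.

Lemma expect_ge0 L F : (forall p, List.In p L -> 0 < p.1) ->
  (forall p, List.In p L -> 0 <= F p.2) -> 0 <= expect L F.
Proof.
move=> L_gt0 F_ge0; apply: le_trans (ler_expect (F := fun=> 0) L_gt0 F_ge0).
by rewrite /expect big1 // => p _; rewrite mulr0.
Qed.

End Expectation.

Lemma sum_point (sy : seq state) z (F : state -> R) :
  uniq sy -> z \in sy -> \sum_(y <- sy) point z y * F y = F z.
Proof.
move=> usy zsy; rewrite (bigD1_seq z) //= /point eqxx mul1r big1 ?addr0 //.
by move=> y /negbTE ->; rewrite mul0r.
Qed.

(* From a single configuration the only coupling is the product one. *)
Lemma tcost_point z r (pi : state -> R) (sy : seq state) :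
  (forall y, 0 <= pi y) -> uniq sy -> (forall y, pi y != 0 -> y \in sy) ->
  \sum_(y <- sy) pi y = 1 ->
  tcost (point z) r pi = \sum_(y <- sy) pi y * cost z r y.
Proof.
move=> pi_ge0 usy pisy pi1; rewrite /tcost.
set V := \sum_(y <- sy) _.
suff -> : [set v | exists g sx sy', coupling_on g (point z) pi sx sy' /\
            v = \sum_(x <- sx) \sum_(y <- sy') g x y * cost x r y] = [set V].
  exact: inf1.
apply/seteqP; split=> v /=.
  move=> [g [sx [sy' [[g_ge0 g_supp [usx usy'] [pzsx pisy'] [gx gy]] ->]]]].
  have zsx : z \in sx by apply: pzsx; rewrite /point eqxx oner_eq0.
  have g_out x y : x != z -> g x y = 0.
    move=> xz; apply: contraNeq xz => /g_supp [].
    by rewrite /supp /point; case: eqP; rewrite ?ltxx.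
  have gz y : g z y = pi y.
    by rewrite -gy (bigD1_seq z) //= big1 ?addr0 // => x; apply: g_out.
  rewrite (bigD1_seq z) //= [X in _ + X]big1 ?addr0 => [|x xz]; last first.
    by rewrite big1 // => y _; rewrite g_out ?mul0r.
  under eq_bigr do rewrite gz.
  apply/perm_big_supp/uniq_perm; rewrite ?filter_uniq // => y; rewrite !mem_filter.
  have [->|piy] := eqVneq (pi y) 0; first by rewrite mul0r eqxx.
  by rewrite pisy ?pisy'.
move=> ->; exists (fun x y => point z x * pi y), [:: z], sy; split; last first.
  by rewrite big_cons big_nil addr0; apply: eq_bigr => y _; rewrite /point eqxx mul1r.
split=> [x y|x y|//||].
- by rewrite mulr_ge0 ?ler0n.
- rewrite /point /supp; have [_|_] := eqVneq x z; rewrite ?mul0r ?mul1r ?eqxx // => piy.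
  by rewrite ltr01 lt0r piy pi_ge0.
- split=> [x|//]; rewrite /point mem_seq1.
  by have [|] := eqVneq x z; rewrite ?eqxx.
- split=> [x|y]; last by rewrite big_cons big_nil addr0 /point eqxx mul1r.
  by rewrite -big_distrr /= pi1 mulr1.
Qed.

Section Mix.
Variables (L : seq (R * kstate)) (center : kstate -> state).
Hypothesis L_gt0 : forall p, List.In p L -> 0 < p.1.
Hypothesis L1 : \sum_(p <- L) p.1 = 1.
Hypothesis L_at : forall p, List.In p L -> kpi p.2 = point (center p.2).

Let centers := undup [seq center p.2 | p <- L].

Lemma mixE : mix L = fun y => expect L (fun k => point (center k) y).
Proof. by apply/funext=> y; apply: eq_big_In => p /L_at ->. Qed.

Lemma sum_mix (F : state -> R) :
  \sum_(y <- centers) mix L y * F y = expect L (fun k => F (center k)).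
Proof.
rewrite mixE; under eq_bigr do rewrite big_distrl /=.
rewrite exchange_big; apply: eq_big_In => p Lp /=.
under eq_bigr do rewrite -mulrA; rewrite -mulr_sumr sum_point ?undup_uniq //.
by rewrite mem_undup (map_f_In (fun p => center p.2)).
Qed.

Lemma tcost_mix z r : tcost (point z) r (mix L) = expect L (fun k => cost z r (center k)).
Proof.
rewrite (@tcost_point z r (mix L) centers) ?sum_mix ?undup_uniq // => [y|y|].
- by rewrite mixE; apply: expect_ge0 => // p _; rewrite ler0n.
- apply: contraNT; rewrite mem_undup => ny.
  rewrite mixE /expect (eq_big_In (G := fun=> 0)) ?big1 // => p Lp.
  rewrite /point; case: (eqVneq y (center p.2)) ny => [->|_ _]; last by rewrite mulr0.
  by rewrite (map_f_In (fun p => center p.2)).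
- by under eq_bigr do rewrite -[mix L _]mulr1; rewrite sum_mix expect_cst.
Qed.
End Mix.

Definition cycle3 (a b c : P) (i : nat) : P := nth a [:: a; b; c] (i %% 3)%N.

Lemma cycle3_neq (a b c : P) : a != b -> a != c -> b != c ->
  forall i, cycle3 a b c i != cycle3 a b c i.+1 /\ cycle3 a b c i != cycle3 a b c i.+2.
Proof.
move=> ab ac bc i; rewrite /cycle3 -[i.+2]addn2 -[i.+1]addn1 -!(modnDml i).
have : (i %% 3 < 3)%N by rewrite ltn_mod.
by case: (i %% 3)%N => [|[|[|//]]] _ /=; split=> //; rewrite eq_sym.
Qed.

Section Adversary.
Variable q : nat -> P.
Hypothesis q_neq1 : forall t, q t != q t.+1.
Hypothesis q_neq2 : forall t, q t != q t.+2.

Definition lookahead z t : nat := (q t \in val z) * (1 + (q t.+1 \in val z)).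

Definition potential z (c : R) t : R := 3 / 2 * c + 1 / 12 * (lookahead z t)%:R.

Lemma lookahead_ge0 z t : 0 <= (lookahead z t)%:R :> R.
Proof. exact: ler0n. Qed.

Lemma lookahead_le2 z t : (lookahead z t)%:R <= 2 :> R.
Proof. by rewrite (ler_nat R _ 2) /lookahead; case: (_ \in _); case: (_ \in _). Qed.

Lemma lookahead_miss z t : q t \notin val z -> lookahead z t = 0%N.
Proof. by rewrite /lookahead => /negbTE ->. Qed.

Lemma lookahead_hit z t :
  q t \in val z -> (lookahead z t.+1)%:R + 1 <= (lookahead z t)%:R :> R.
Proof.
move=> qz; rewrite natr1 ler_nat /lookahead qz.
have [qz1|//] := boolP (q t.+1 \in val z).
by rewrite (negbTE (state_no_three (q_neq1 t) (q_neq2 t) (q_neq1 t.+1) qz qz1)).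
Qed.

Section AmortizedStep.
Variables (T : Type) (L : seq (R * T)) (center : T -> state) (w : T -> R).
Variables (z : state) (c adj : R) (t : nat).
Hypothesis L_gt0 : forall p, List.In p L -> 0 < p.1.
Hypothesis L1 : \sum_(p <- L) p.1 = 1.
Hypothesis adjP : forall x, adj + expect L w + expect L (fun k => dist (center k) x)
                            <= c + cost z (q t) x.

Lemma amortized_step :
  1 / 12 + expect L (fun k => potential (center k) (w k) t.+1) - potential z c t
    <= expect L (fun k => cost z (q t) (center k)) - 3 / 2 * adj.
Proof.
rewrite /potential expectD !expectZ.
have pot := lookahead_le2 z t; have pot0 := lookahead_ge0 z t.
have [hit|miss] := boolP (q t \in val z).
  have := adjP z; rewrite cost_inl // dist_xx addr0 => adjz.
  have : expect L (fun=> 1 / 12 - 1 / 12 * (lookahead z t)%:R) <=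
         expect L (fun k => cost z (q t) (center k) + 3 / 2 * dist (center k) z
                            - 1 / 12 * (lookahead (center k) t.+1)%:R).
    apply: ler_expect => // p _; rewrite cost_inl //.
    have [->|nz] := eqVneq (center p.2) z.
      by rewrite dist_xx; have := lookahead_hit hit; lra.
    have zn : z != center p.2 by rewrite eq_sym.
    have := dist_ge1 nz; have := dist_ge1 zn; have := lookahead_le2 (center p.2) t.+1.
    lra.
  rewrite expect_cst // !expectB expectD !expectZ; lra.
have [x1 [x2 [x12 x1q x2q zx1 zx2]]] := two_neighbours miss.
have cost_x x' : q t \in val x' -> cost z (q t) x' = dist z x'.
  by move=> x'q; rewrite cost_inr //; apply: contraNneq miss => ->.
have := adjP x1; have := adjP x2; rewrite !cost_x // (lookahead_miss miss).
have : expect L (fun=> 1 / 12 + 3 / 2) <=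
       expect L (fun k => cost z (q t) (center k)
                          + 3 / 4 * (dist (center k) x1 + dist (center k) x2)
                          - 1 / 12 * (lookahead (center k) t.+1)%:R).
  apply: ler_expect => // p _.
  have := cost_notinl_ge1 (center p.2) miss; have := dist_add_ge1 (center p.2) x12.
  have := lookahead_le2 (center p.2) t.+1; lra.
rewrite expect_cst // !expectB expectD !expectZ expectD; lra.
Qed.
End AmortizedStep.

Lemma Ecost_cons (A : kalg R P) k r rho : Ecost A k (r :: rho) =
  tcost (kpi k) r (mix (ka_next A k r)) + expect (ka_next A k r) (Ecost A ^~ rho).
Proof. by []. Qed.

Lemma Eadj_cons (A : kalg R P) k r rho x : Eadj A k (r :: rho) x =
  ka_adjust A k r + expect (ka_next A k r) (fun k' => Eadj A k' rho x).
Proof. by []. Qed.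

Section Algorithm.
Variables (A : kalg R P) (s0 : state).
Hypothesis A_valid : valid_kalg A s0.
Hypothesis A_two : forall k, reachable A s0 k -> at_most_two_active k.

Definition center_of (k : kstate) : state := xget s0 (kstate_at k).

Lemma center_ofP k : reachable A s0 k -> kstate_at k (center_of k).
Proof.
move=> Rk; have [z kz] := kstate_at_two_active (A_valid Rk).1 (A_two Rk).
by rewrite /center_of; case: xgetP => // /(_ z).
Qed.

Lemma excess_cost_ge n t k z x : reachable A s0 k -> kstate_at k z ->
  n%:R / 12 - potential z (komega k z) t - 3 <=
  Ecost A k (map q (iota t n)) - 3 / 2 * Eadj A k (map q (iota t n)) x.
Proof.
elim: n t k z x => [|n IH] t k z x Rk [pik omk].
  rewrite /= (omk x) /potential mul0r.
  by have := dist_le2 z x; have := lookahead_ge0 z t; lra.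
rewrite [map _ _]/= Ecost_cons Eadj_cons; set L := ka_next A k (q t).
have [[_ [w_ge0 _] _] /(_ (q t)) [lam_gt0 L1 Ladj]] := A_valid Rk.
have L_gt0 p : List.In p L -> 0 < p.1 by case: p => ??; apply: lam_gt0.
have RL p : List.In p L -> reachable A s0 p.2 by case: p => ??; apply: reachS.
have L_at p : List.In p L -> kstate_at p.2 (center_of p.2) by move/RL/center_ofP.
set rho := map q (iota t.+1 n).
have IHL :
    expect L (fun k' => n%:R / 12 - potential (center_of k') (komega k' (center_of k')) t.+1 - 3)
    <= expect L (fun k' => Ecost A k' rho - 3 / 2 * Eadj A k' rho x).
  by apply: ler_expect => // p Lp; apply: IH; [apply: RL | apply: L_at].
rewrite !expectB !expectZ !expect_cst // in IHL.
have adjP x' : ka_adjust A k (q t) + expect L (fun k' => komega k' (center_of k'))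
                + expect L (fun k' => dist (center_of k') x')
              <= komega k z + cost z (q t) x'.
  rewrite -addrA -expectD.
  have -> : expect L (fun k' => komega k' (center_of k') + dist (center_of k') x')
          = expect L (fun k' => komega k' x').
    by apply: eq_big_In => p /L_at [_ om]; rewrite (om x').
  exact: le_trans (Ladj x') (update_le (q t) z x' w_ge0).
have := amortized_step L_gt0 L1 adjP.
rewrite pik (tcost_mix L_gt0 L1 (fun p Lp => (L_at p Lp).1)) -[n.+1%:R]natr1.
lra.
Qed.

End Algorithm.

End Adversary.

End TwoCache.

Theorem mainTheorem11 (R : realType) (P : choiceType)
    (P_infinite : forall s : seq P, exists p : P, p \notin s)
    (s0 : state P) :
  ~ exists A : kalg R P,
      [/\ valid_kalg A s0,
          competitive A s0 (3 / 2)
        & forall k, reachable A s0 k -> at_most_two_active k].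
Proof.
move=> [A [A_valid [K AK] A_two]].
have [a _] := P_infinite [::].
have [b] := P_infinite [:: a]; rewrite mem_seq1 eq_sym => ab.
have [c] := P_infinite [:: a; b]; rewrite !inE negb_or ![c == _]eq_sym => /andP[ac bc].
have q_neq i := cycle3_neq ab ac bc i.
have [n Kn] : exists n : nat, 12 * K + 40 < n%:R.
  exists (Num.Def.archi_bound `|12 * K + 40|).
  exact: le_lt_trans (ler_norm _) (archi_boundP (normr_ge0 _)).
have := excess_cost_ge (fun i => (q_neq i).1) (fun i => (q_neq i).2) A_valid A_two
          n 0 s0 (reach0 A s0) (kstate_at_init R s0).
have := AK (map (cycle3 a b c) (iota 0 n)) s0.
rewrite /potential /= dist_xx; have := lookahead_le2 R (cycle3 a b c) s0 0.
lra.
Qed.
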